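(* If $g\in G$ satisfies $g(x)=x$, then $g=1$. Consequently the map $G\to G(x)$, $g\mapsto g(x)$, is a bijection.
   Context: $\mathbb F$ is a field of characteristic zero and $\mathfrak{sl}_2$ is the Lie algebra of $2\times2$ trace-zero matrices over $\mathbb F$. The equitable basis is $x=\begin{pmatrix}1&0\\0&-1\end{pmatrix}$, $y=\begin{pmatrix}-1&2\\0&1\end{pmatrix}$, $z=\begin{pmatrix}-1&0\\-2&1\end{pmatrix}$. Let $x^*=\begin{pmatrix}1&-1\\1&-1\end{pmatrix}$, $y^*=\begin{pmatrix}0&0\\1&0\end{pmatrix}$, $z^*=\begin{pmatrix}0&-1\\0&0\end{pmatrix}$ (these are nilpotent). $G$ is the subgroup of $\mathrm{Aut}_{\mathbb F}(\mathfrak{sl}_2)$ generated by $\exp(\mathrm{ad}\,x^* )$, $\exp(\mathrm{ad}\,y^* )$ and $\exp(\mathrm{ad}\,z^* )$. $G(x)$ denotes the orbit $\{g(x): g\in G\}$. *)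

From HB Require Import structures.
From mathcomp Require Import all_boot all_order all_algebra.
Set Implicit Arguments. Unset Strict Implicit. Unset Printing Implicit Defensive.
Import GRing.Theory.
Local Open Scope ring_scope.

Section SL2.
Variable F : fieldType.

Definition mx2 (a b c d : F) : 'M[F]_2 :=
  \matrix_(i < 2, j < 2)
    if i == ord0 then (if j == ord0 then a else b) else (if j == ord0 then c else d).

Definition in_sl2 (A : 'M[F]_2) : Prop := \tr A = 0.

Definition ad (a : 'M[F]_2) (A : 'M[F]_2) : 'M[F]_2 := a *m A - A *m a.

(* exponential of a nilpotent endomorphism D of the 4-dimensional space M_2(F):
   D^4 = 0, so exp D = sum_{k<4} D^k / k!  (exact truncation) *)
Definition expnil (D : 'M[F]_2 -> 'M[F]_2) (A : 'M[F]_2) : 'M[F]_2 :=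
  \sum_(k < 4) ((k`!)%:R)^-1 *: iter k D A.

Definition ex : 'M[F]_2 := mx2 1 0 0 (-1).
Definition xs : 'M[F]_2 := mx2 1 (-1) 1 (-1).
Definition ys : 'M[F]_2 := mx2 0 0 1 0.
Definition zs : 'M[F]_2 := mx2 0 (-1) 0 0.

(* G: the subgroup of Aut(sl2) generated by exp(ad xs), exp(ad ys), exp(ad zs).
   Elements are represented as maps on M_2(F); only their action on sl2 matters. *)
Inductive in_G : ('M[F]_2 -> 'M[F]_2) -> Prop :=
  | G_id : in_G id
  | G_genx : in_G (expnil (ad xs))
  | G_geny : in_G (expnil (ad ys))
  | G_genz : in_G (expnil (ad zs))
  | G_comp g h : in_G g -> in_G h -> in_G (g \o h)
  | G_inv g h : in_G g ->
      (forall A, in_sl2 A -> in_sl2 (h A)) ->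
      (forall A, in_sl2 A -> h (g A) = A /\ g (h A) = A) ->
      in_G h.

End SL2.

From Pilot Require Import Defs.
From HB Require Import structures.
From mathcomp Require Import all_boot all_order all_algebra.
From mathcomp Require Import ring.
Set Implicit Arguments. Unset Strict Implicit. Unset Printing Implicit Defensive.
Import GRing.Theory.
Local Open Scope ring_scope.

(* Every generator exp(ad n) of G is conjugation A |-> (1 + n) A (1 + n)^-1,
   because n^2 = 0; here 1 + n has integer entries and determinant 1.  Hence,
   by induction on the generation of G, every g in G acts on sl2 as
   conjugation by (the image in M_2(F) of) a matrix N of SL_2(Z).
   If two such conjugations agree on x, then N := Nh^-1 Ng fixes x, i.e.
   commutes with x = diag(1, -1); in characteristic 0 this forces N to be
   diagonal, and a diagonal matrix of SL_2(Z) is +1 or -1, whose conjugation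
   is the identity.  So g(x) = h(x) implies g = h on sl2, and g(x) = x
   implies g = 1 (take h = 1). *)

Section TwoByTwo.
Variable R : comPzRingType.

Lemma ord2P (P : 'I_2 -> Prop) : P 0 -> P 1 -> forall i, P i.
Proof.
move=> P0 P1 [[|[|//]] lt_i2];
  [rewrite (_ : Ordinal _ = 0) | rewrite (_ : Ordinal _ = 1)] => //; exact: val_inj.
Qed.

Lemma lift0_ord2 : lift ord0 ord0 = 1 :> 'I_2.
Proof. exact: val_inj. Qed.

Lemma matrix2P (A B : 'M[R]_2) :
  A 0 0 = B 0 0 -> A 0 1 = B 0 1 -> A 1 0 = B 1 0 -> A 1 1 = B 1 1 -> A = B.
Proof.
move=> h00 h01 h10 h11; apply/matrixP=> i j.
by move: i j; apply: ord2P; apply: ord2P.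
Qed.

Lemma mulmx2E (A B : 'M[R]_2) i j : (A *m B) i j = A i 0 * B 0 j + A i 1 * B 1 j.
Proof. by rewrite mxE !big_ord_recl big_ord0 addr0 lift0_ord2. Qed.

Lemma det_mx2 (A : 'M[R]_2) : \det A = A 0 0 * A 1 1 - A 0 1 * A 1 0.
Proof.
rewrite (expand_det_row _ 0) !big_ord_recl big_ord0 /cofactor !det_mx11 !mxE /=.
rewrite addr0 expr0 expr1 mul1r mulN1r mulrN.
by congr (_ * _ - _ * _); congr (A _ _); apply: val_inj.
Qed.

Lemma mxtrace2 (A : 'M[R]_2) : \tr A = A 0 0 + A 1 1.
Proof. by rewrite /mxtrace !big_ord_recl big_ord0 addr0 lift0_ord2. Qed.

(* Cayley-Hamilton in size 2, for a trace- and determinant-free matrix: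
   N^2 = tr(N) N - det(N) = 0, and det(1 + N) = 1 + tr N + det N = 1. *)
Lemma nilpotent_mx2 (N : 'M[R]_2) :
  \tr N = 0 -> \det N = 0 -> N *m N = 0 /\ \det (1%:M + N) = 1.
Proof.
rewrite mxtrace2 det_mx2 => trN detN; split.
  apply: matrix2P; rewrite !mulmx2E mxE.
  - have -> : N 0 0 * N 0 0 + N 0 1 * N 1 0
      = N 0 0 * (N 0 0 + N 1 1) - (N 0 0 * N 1 1 - N 0 1 * N 1 0) by ring.
    by rewrite trN detN mulr0 subrr.
  - by rewrite mulrC -mulrDr trN mulr0.
  - by rewrite [N 1 1 * _]mulrC -mulrDr trN mulr0.
  - have -> : N 1 0 * N 0 1 + N 1 1 * N 1 1
      = N 1 1 * (N 0 0 + N 1 1) - (N 0 0 * N 1 1 - N 0 1 * N 1 0) by ring.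
    by rewrite trN detN mulr0 subrr.
rewrite det_mx2 !mxE /=.
have -> : (1 + N 0 0) * (1 + N 1 1) - (0 + N 0 1) * (0 + N 1 0)
  = 1 + (N 0 0 + N 1 1) + (N 0 0 * N 1 1 - N 0 1 * N 1 0) by ring.
by rewrite trN detN !addr0.
Qed.

End TwoByTwo.

(* The units of Z are 1 and -1, so p * s = 1 forces p = s. *)
Lemma int_mul_eq1 (p s : int) : p * s = 1 -> p = s.
Proof.
move=> ps1; have := intUnitRing.unitzPl ps1; rewrite qualifE /= => /orP[] /eqP s1;
  by move: ps1; rewrite s1 ?mulr1 ?mulrN1 // => /eqP; rewrite eqr_oppLR => /eqP.
Qed.

(* The 2x2 matrix with rows (a, b) and (c, d), over any type;
   Defs.mx2 is its instance over a field. *)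
Definition mx22 (T : Type) (a b c d : T) : 'M[T]_2 :=
  \matrix_(i < 2, j < 2)
    if i == ord0 then (if j == ord0 then a else b) else (if j == ord0 then c else d).

Lemma map_mx22 (S T : Type) (f : S -> T) (a b c d : S) :
  map_mx f (mx22 a b c d) = mx22 (f a) (f b) (f c) (f d).
Proof. by apply/matrixP=> i j; rewrite !mxE; case: (i == ord0); case: (j == ord0). Qed.

Section Conjugation.
Variables (R : comUnitRingType) (n : nat).
Implicit Types (M N A : 'M[R]_n).

Lemma invmxM M N : M \in unitmx -> N \in unitmx ->
  invmx (M *m N) = invmx N *m invmx M.
Proof.
move=> uM uN; have uMN : M *m N \in unitmx by rewrite unitmx_mul uM.
rewrite -[RHS]mul1mx -(mulVmx uMN) -!mulmxA (mulmxA N) mulmxV // mul1mx.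
by rewrite mulmxV // mulmx1.
Qed.

Definition Ad M A : 'M[R]_n := M *m A *m invmx M.

Lemma Ad1 A : Ad 1%:M A = A.
Proof. by rewrite /Ad invmx1 mul1mx mulmx1. Qed.

Lemma Ad_mul M N A : M \in unitmx -> N \in unitmx -> Ad (M *m N) A = Ad M (Ad N A).
Proof. by move=> uM uN; rewrite /Ad invmxM // !mulmxA. Qed.

Lemma AdK M A : M \in unitmx -> Ad (invmx M) (Ad M A) = A.
Proof. by move=> uM; rewrite /Ad invmxK !mulmxA mulVmx // mul1mx mulmxKV. Qed.

Lemma AdKV M A : M \in unitmx -> Ad M (Ad (invmx M) A) = A.
Proof. by move=> uM; rewrite -{1}(invmxK M) AdK ?unitmx_inv. Qed.

Lemma mxtrace_Ad M A : M \in unitmx -> \tr (Ad M A) = \tr A.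
Proof. by move=> uM; rewrite /Ad mxtrace_mulC mulmxA mulVmx ?mul1mx. Qed.

Lemma Ad_scalar (c : R) A : c \is a GRing.unit -> Ad c%:M A = A.
Proof.
move=> uc; rewrite /Ad invmx_scalar mul_scalar_mx mul_mx_scalar scalerA.
by rewrite mulVr // scale1r.
Qed.

Lemma Ad_fix_commute M A : M \in unitmx -> Ad M A = A -> M *m A = A *m M.
Proof. by move=> uM {2}<-; rewrite /Ad mulmxKV. Qed.

End Conjugation.

Lemma invmx_unipotent (R : comUnitRingType) (m : nat) (n : 'M[R]_m) :
  n *m n = 0 -> invmx (1%:M + n) = 1%:M - n.
Proof.
move=> nn; have inv : (1%:M + n) *m (1%:M - n) = 1%:M.
  by rewrite mulmxDl mul1mx mulmxBr mulmx1 nn subr0 subrK.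
have [u1n _] := mulmx1_unit inv.
by rewrite -[RHS](mulKmx u1n) inv mulmx1.
Qed.

Lemma expnil_ad_sq0 (F : fieldType) (n : 'M[F]_2) :
  (2%:R : F) != 0 -> n *m n = 0 -> forall A, expnil (ad n) A = Ad (1%:M + n) A.
Proof.
move=> two_neq0 nn A.
have ad2 : ad n (ad n A) = (- 2%:R) *: (n *m A *m n).
  rewrite /ad mulmxBr mulmxBl !mulmxA nn mul0mx -!mulmxA nn mulmx0.
  by rewrite mulmxA sub0r subr0 scaleNr -opprD scaler_nat mulr2n.
have ad3 : ad n (ad n (ad n A)) = 0.
  rewrite ad2 {1}/ad -scalemxAr -scalemxAl !mulmxA nn !mul0mx -!mulmxA nn.
  by rewrite !mulmx0 scaler0 subrr.
rewrite /expnil !big_ord_recl big_ord0 /= ad3 ad2 scaler0 addr0.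
rewrite /bump /= invr1 !scale1r scalerA mulrN mulVf // scaleN1r addr0.
rewrite /Ad invmx_unipotent // /ad mulmxDl mul1mx mulmxBr mulmx1 mulmxDl.
by rewrite opprD !addrA.
Qed.

Section IntegralConjugation.
Variable F : fieldType.
Hypothesis charF0 : [pchar F] =i pred0.

Lemma natr2_neq0 : (2%:R : F) != 0.
Proof. by rewrite ((pcharf0P F).1 charF0 2). Qed.

Lemma intr_eq0_char0 (z : int) : (z%:~R : F) = 0 -> z = 0.
Proof.
case: z => k; rewrite ?NegzE ?rmorphN /= => /eqP; rewrite ?oppr_eq0;
  by rewrite [_ == 0]((pcharf0P F).1 charF0) => /eqP ->.
Qed.

Definition int_mx (m : nat) (N : 'M[int]_m) : 'M[F]_m := map_mx intr N.

Lemma int_mxM (m : nat) (M N : 'M[int]_m) : int_mx (M *m N) = int_mx M *m int_mx N.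
Proof. exact: map_mxM. Qed.

Lemma unitmx_int_mx (m : nat) (N : 'M[int]_m) : \det N = 1 -> int_mx N \in unitmx.
Proof. by move=> detN; rewrite unitmxE det_map_mx detN rmorph1 unitr1. Qed.

Lemma int_mx_inv (m : nat) (N : 'M[int]_m) :
  \det N = 1 -> int_mx (invmx N) = invmx (int_mx N).
Proof.
move=> detN; rewrite /invmx unitmx_int_mx // unitmxE detN unitr1.
by rewrite det_map_mx detN rmorph1 !invr1 !scale1r /int_mx map_mx_adj.
Qed.

Lemma det_invmx1 (m : nat) (N : 'M[int]_m) : \det N = 1 -> \det (invmx N) = 1.
Proof. by move=> detN; rewrite det_inv detN invr1. Qed.

Definition SL2Z_conj (g : 'M[F]_2 -> 'M[F]_2) : Prop :=
  exists2 N : 'M[int]_2, \det N = 1 & forall A, in_sl2 A -> g A = Ad (int_mx N) A.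

Lemma Ad_int_sl2 (N : 'M[int]_2) A : \det N = 1 -> in_sl2 A -> in_sl2 (Ad (int_mx N) A).
Proof. by move=> detN; rewrite /in_sl2 mxtrace_Ad // unitmx_int_mx. Qed.

Lemma SL2Z_conj_expnil (n : 'M[int]_2) :
  \tr n = 0 -> \det n = 0 -> SL2Z_conj (expnil (ad (int_mx n))).
Proof.
move=> trn detn; have [nn det1n] := nilpotent_mx2 trn detn.
exists (1%:M + n) => // A _.
rewrite expnil_ad_sq0 ?natr2_neq0 /int_mx ?map_mxD ?map_mx1 //.
by rewrite -map_mxM nn map_mx0.
Qed.

Lemma in_G_SL2Z_conj g : in_G g -> SL2Z_conj g.
Proof.
have int_mx22 (a b c d : int) :
    int_mx (mx22 a b c d) = mx22 a%:~R b%:~R c%:~R d%:~R by exact: map_mx22.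
elim=> {g} [||||g h _ [Ng detg Eg] _ [Nh deth Eh]|g h _ [Ng detg Eg] h_sl2 gh_inv].
- by exists 1%:M; rewrite ?det1 // => A _; rewrite /int_mx map_mx1 Ad1.
- have -> : xs F = int_mx (mx22 1 (-1) 1 (-1)) by rewrite int_mx22 rmorph1 rmorphN1.
  by apply: SL2Z_conj_expnil; rewrite ?mxtrace2 ?det_mx2 !mxE.
- have -> : ys F = int_mx (mx22 0 0 1 0) by rewrite int_mx22 rmorph1 rmorph0.
  by apply: SL2Z_conj_expnil; rewrite ?mxtrace2 ?det_mx2 !mxE.
- have -> : zs F = int_mx (mx22 0 (-1) 0 0) by rewrite int_mx22 rmorphN1 rmorph0.
  by apply: SL2Z_conj_expnil; rewrite ?mxtrace2 ?det_mx2 !mxE.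
- exists (Ng *m Nh); first by rewrite det_mulmx detg deth mulr1.
  move=> A HA /=; rewrite Eh // Eg; last exact: Ad_int_sl2.
  by rewrite int_mxM Ad_mul ?unitmx_int_mx.
- exists (invmx Ng); first exact: det_invmx1.
  move=> A HA; have [_ ghA] := gh_inv A HA.
  rewrite int_mx_inv // -{1}(AdK (h A) (unitmx_int_mx detg)) -Eg ?ghA //.
  exact: h_sl2.
Qed.

Lemma centralizer_ex (B : 'M[F]_2) : B *m ex F = ex F *m B -> B 0 1 = 0 /\ B 1 0 = 0.
Proof.
have eq_opp0 (a : F) : a = - a -> a = 0.
  move/eqP; rewrite -subr_eq0 opprK -mulr2n -mulr_natr mulf_eq0.
  by rewrite (negbTE natr2_neq0) orbF => /eqP.
move=> comm; have := congr1 (fun M : 'M[F]_2 => M 0 1) comm.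
have := congr1 (fun M : 'M[F]_2 => M 1 0) comm.
rewrite /= !mulmx2E !mxE /= !(mulr0, mul0r, mulr1, mul1r, mulrN1, mulN1r, addr0, add0r).
by move=> E10 E01; split; apply: eq_opp0; [exact/esym | exact: E10].
Qed.

Lemma SL2Z_diag (N : 'M[int]_2) :
  \det N = 1 -> N 0 1 = 0 -> N 1 0 = 0 -> N = (N 0 0)%:M /\ N 0 0 * N 0 0 = 1.
Proof.
rewrite det_mx2 => + N01 N10; rewrite N01 mul0r subr0 => detN.
have N11 : N 1 1 = N 0 0 by rewrite (int_mul_eq1 detN).
split; last by rewrite -{2}N11.
by apply: matrix2P; rewrite !mxE /= ?N01 ?N10 ?N11.
Qed.

Lemma Ad_int_fix_ex (N : 'M[int]_2) :
  \det N = 1 -> Ad (int_mx N) (ex F) = ex F -> forall A, Ad (int_mx N) A = A.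
Proof.
move=> detN fixN A.
have [M01 M10] := centralizer_ex (Ad_fix_commute (unitmx_int_mx detN) fixN).
have N01 : N 0 1 = 0 by apply: intr_eq0_char0; rewrite -M01 mxE.
have N10 : N 1 0 = 0 by apply: intr_eq0_char0; rewrite -M10 mxE.
have [NE sq1] := SL2Z_diag detN N01 N10.
rewrite NE /int_mx map_scalar_mx Ad_scalar //.
by apply/unitrPr; exists (N 0 0)%:~R; rewrite -rmorphM sq1 rmorph1.
Qed.

Lemma Ad_int_eq_on_ex (Ng Nh : 'M[int]_2) : \det Ng = 1 -> \det Nh = 1 ->
  Ad (int_mx Ng) (ex F) = Ad (int_mx Nh) (ex F) ->
  forall A, Ad (int_mx Ng) A = Ad (int_mx Nh) A.
Proof.
move=> detg deth gh A; set N := invmx Nh *m Ng.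
have detN : \det N = 1 by rewrite det_mulmx det_invmx1 // detg mulr1.
have AdN B : Ad (int_mx N) B = Ad (invmx (int_mx Nh)) (Ad (int_mx Ng) B).
  by rewrite /N int_mxM int_mx_inv // Ad_mul ?unitmx_inv ?unitmx_int_mx.
have fixN : Ad (int_mx N) (ex F) = ex F by rewrite AdN gh AdK ?unitmx_int_mx.
by rewrite -[LHS](AdKV _ (unitmx_int_mx deth)) -AdN (Ad_int_fix_ex detN fixN).
Qed.

End IntegralConjugation.

Theorem lemma4p1 (F : fieldType) (charF0 : [pchar F] =i pred0) :
  (forall g : 'M[F]_2 -> 'M[F]_2,
      in_G g -> g (ex F) = ex F -> forall A, in_sl2 A -> g A = A) /\
  (forall g h : 'M[F]_2 -> 'M[F]_2,
      in_G g -> in_G h -> g (ex F) = h (ex F) -> forall A, in_sl2 A -> g A = h A).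
Proof.
have ex_sl2 : in_sl2 (ex F) by rewrite /in_sl2 mxtrace2 !mxE /= subrr.
have orbit_inj g h : in_G g -> in_G h -> g (ex F) = h (ex F) ->
    forall A, in_sl2 A -> g A = h A.
  move=> /(in_G_SL2Z_conj charF0)[Ng detg Eg] /(in_G_SL2Z_conj charF0)[Nh deth Eh].
  move=> gh A HA; rewrite Eg // Eh //.
  by apply: (Ad_int_eq_on_ex charF0) => //; rewrite -Eg // -Eh.
split=> // g Gg gx; exact: orbit_inj (G_id F) gx.
Qed.
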